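(* Let $X$ be a finite 2-covered graph of spaces. Then $\chi(\Gamma(X))\le\chi(\Gamma_U(X))$.
   Context: A 2-covered graph of spaces $X$ consists of: a finite connected graph $\Gamma_U(X)$ (the underlying graph), with oriented edges $e$, reversal $\bar e$, and terminal/initial vertices $\tau(e),\iota(e)=\tau(\bar e)$; for each vertex $v$ a finite connected graph $V$ (vertex space); for each edge $e$ a finite connected graph $E=\bar E$ (edge space, possibly a single point); and for each oriented edge $e$ a combinatorial immersion (locally injective graph map) $\tau_e\colon E\looparrowright V$ where $v=\tau(e)$; subject to the 2-covering condition: for each vertex $v$, every edge of $V$ is the image of exactly two edges of $\bigsqcup_{\tau(e)=v}E$. The horizontal subgraph $\Gamma(X)$ is the graph whose vertices are the vertices of all vertex spaces and with one edge for each edge $e$ of $\Gamma_U(X)$ and each vertex $x$ of $E$, joining $\tau_{\bar e}(x)$ to $\tau_e(x)$. $\chi$ denotes Euler characteristic. *)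

From HB Require Import structures.
From mathcomp Require Import all_boot all_order all_algebra.
Set Implicit Arguments. Unset Strict Implicit. Unset Printing Implicit Defensive.

(* A finite graph (loops and multiple edges allowed): each (unoriented)
   edge e has an arbitrarily chosen reference orientation with endpoints
   msrc e and mdst e.  The oriented edges ("darts") are pairs (e, b) :
   (e, true) is e with its reference orientation, (e, false) is its reversal
   \bar e. *)
Record mgraph := MGraph {
  mV : finType;
  mE : finType;
  msrc : mE -> mV;
  mdst : mE -> mV }.

Definition dart (G : mgraph) := (mE G * bool)%type.
Definition drev (G : mgraph) (d : dart G) : dart G := (d.1, ~~ d.2).
Definition dhead (G : mgraph) (d : dart G) : mV G :=
  if d.2 then mdst d.1 else msrc d.1.

Definition euler (G : mgraph) : int := (#|mV G|)%:Z - (#|mE G|)%:Z.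

Definition adj (G : mgraph) : rel (mV G) := fun x y =>
  [exists e : mE G, ((msrc e == x) && (mdst e == y)) ||
                    ((msrc e == y) && (mdst e == x))].
Definition connected (G : mgraph) : Prop :=
  0 < #|mV G| /\ forall x y : mV G, connect (@adj G) x y.

(* Combinatorial map data: vertices to vertices, each edge to an edge
   together with an orientation flag (true = reference orientations agree). *)
Record gmap (G H : mgraph) := GMap {
  gmv : mV G -> mV H;
  gme : mE G -> mE H * bool }.

Definition gmd (G H : mgraph) (f : gmap G H) (d : dart G) : dart H :=
  ((gme f d.1).1, if (gme f d.1).2 then d.2 else ~~ d.2).

Definition is_graph_map (G H : mgraph) (f : gmap G H) : Prop :=
  forall d : dart G, dhead (gmd f d) = gmv f (dhead d).

Definition immersion (G H : mgraph) (f : gmap G H) : Prop :=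
  is_graph_map f /\
  forall d1 d2 : dart G, dhead d1 = dhead d2 -> gmd f d1 = gmd f d2 -> d1 = d2.

(* A graph of spaces: underlying graph, vertex spaces, edge spaces (one per
   unoriented edge, so E = \bar E), and for each oriented edge d a map
   tau_d : E_{d.1} -> V_{tau(d)}. *)
Record graph_of_spaces := GoS {
  gU : mgraph;
  gVs : mV gU -> mgraph;
  gEs : mE gU -> mgraph;
  gtau : forall d : dart gU, gmap (gEs d.1) (gVs (dhead d)) }.

Arguments gVs : clear implicits.
Arguments gEs : clear implicits.
Arguments gtau : clear implicits.

Definition two_covered (X : graph_of_spaces) : Prop :=
  [/\ connected (gU X),
      (forall v, connected (gVs X v)),
      (forall a, connected (gEs X a)),
      (forall d, immersion (gtau X d)) &
      (* every edge p of V_v is the image of exactly two edges of the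
         disjoint union of the E_e over oriented edges e with tau(e) = v *)
      forall p : {v : mV (gU X) & mE (gVs X v)},
        \sum_(d : dart (gU X))
          #|[pred x : mE (gEs X d.1) |
              Tagged (fun v => mE (gVs X v)) (gme (gtau X d) x).1 == p]| = 2].

Definition hsrc (X : graph_of_spaces)
  (ax : {a : mE (gU X) & mV (gEs X a)}) : {v : mV (gU X) & mV (gVs X v)} :=
  Tagged (fun v => mV (gVs X v)) (gmv (gtau X (tag ax, false)) (tagged ax)).
Definition hdst (X : graph_of_spaces)
  (ax : {a : mE (gU X) & mV (gEs X a)}) : {v : mV (gU X) & mV (gVs X v)} :=
  Tagged (fun v => mV (gVs X v)) (gmv (gtau X (tag ax, true)) (tagged ax)).

Definition horizontal (X : graph_of_spaces) : mgraph :=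
  @MGraph {v : mV (gU X) & mV (gVs X v)} {a : mE (gU X) & mV (gEs X a)}
    (@hsrc X) (@hdst X).

From mathcomp Require Import all_boot all_order all_algebra zify.
Import Order.TTheory GRing.Theory Num.Theory.
Set Implicit Arguments. Unset Strict Implicit. Unset Printing Implicit Defensive.

(* chi(Gamma(X)) - chi(Gamma_U(X)) = sum_v (|V_v| - 1) - sum_a (|E_a| - 1), so
   it suffices to show 2 (|V| - 1) <= sum_{tau(e) = v} (|E_e| - 1) at every
   vertex v and to sum over v, each edge of Gamma_U being seen from both ends.
   At v, take a breadth-first spanning tree of V, with h the height.  Each of
   its |V| - 1 edges has exactly two lifts to the edge spaces; sending each
   lift to its higher endpoint, and each edge space to one of its lowest
   vertices, is injective because the tau_e are locally injective.  Hence
   #{e | tau(e) = v} + 2 (|V| - 1) <= sum_{tau(e) = v} |E_e|. *)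

Lemma card_tagged_pred (I : finType) (J : I -> finType)
    (Q : forall i, pred (J i)) :
  #|[pred z : {i : I & J i} | Q (tag z) (tagged z)]| = \sum_i #|[pred x | Q i x]|.
Proof.
rewrite -sum1_card; transitivity (\sum_i \sum_(x | Q i x) 1).
  by rewrite sig_big_dep.
by apply: eq_bigr => i _; rewrite sum1_card.
Qed.

Lemma card_tagged_sum (I : finType) (J : I -> finType) :
  #|{: {i : I & J i}}| = \sum_i #|J i|.
Proof. by rewrite card_tagged sumnE big_map big_enum. Qed.

Lemma sum_pred_card (I : finType) (F : I -> nat) :
  (forall i, 0 < F i) -> \sum_i F i = \sum_i (F i).-1 + #|I|.
Proof.
move=> F_gt0; rewrite -sum1_card -big_split /=.
by apply: eq_bigr => i _; rewrite addn1 prednK.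
Qed.

Section Height.

Variables (T : finType) (e : rel T) (x0 : T).

Definition reach (n : nat) : {set T} :=
  iter n (fun A => A :|: [set y | [exists z in A, e z y]]) [set x0].

Lemma reach_path n z p :
  path e z p -> z \in reach n -> last z p \in reach (n + size p).
Proof.
elim: p z n => [|y p IHp] z n /=; first by rewrite addn0.
case/andP=> ezy pth zn; rewrite addnS -addSn; apply: IHp => //=.
by rewrite !inE; apply/orP; right; apply/existsP; exists z; rewrite zn.
Qed.

Lemma connect_height : (forall y, connect e x0 y) ->
  exists h : T -> nat, forall x, x != x0 -> exists2 z, e z x & h z < h x.
Proof.
move=> x0_conn.
have reached y : exists n, y \in reach n.
  have /connectP[p pth ->] := x0_conn y.
  by exists (0 + size p); apply: reach_path => //; rewrite set11.
exists (fun y => ex_minn (reached y)) => x x_neq0.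
case: ex_minnP => [[|m]] /=; first by rewrite inE (negbTE x_neq0).
rewrite inE => /orP[x_m min_x|]; first by have := min_x _ x_m; rewrite ltnn.
rewrite inE => /existsP[z /andP[z_m ezx]] _.
by exists z => //; case: ex_minnP => k _ /(_ _ z_m).
Qed.

End Height.

Section Darts.

Variable G : mgraph.
Implicit Types (h : mV G -> nat) (d : dart G).

Definition dtail d : mV G := dhead (drev d).

Definition descending h d := h (dtail d) < h (dhead d).

Lemma adj_dart x y : adj x y -> exists d : dart G, dtail d = x /\ dhead d = y.
Proof.
case/existsP=> e /orP[/andP[/eqP xe /eqP ye] | /andP[/eqP ye /eqP xe]].
- by exists (e, true).
- by exists (e, false).
Qed.

Lemma dart_eq_descending h d d' :
  d.1 = d'.1 -> descending h d' -> h (dtail d) <= h (dhead d) -> d = d'.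
Proof.
case: d d' => e b [_ b'] /= <-; rewrite /descending /dtail /dhead /=.
by case: b b' => [] [] //= lt_h le_h; have := leq_trans lt_h le_h; rewrite ltnn.
Qed.

Lemma descending_eq h d d' :
  d.1 = d'.1 -> descending h d -> descending h d' -> d = d'.
Proof.
move=> eq_e desc_d desc_d'.
by apply: (dart_eq_descending (h := h)) => //; apply: ltnW.
Qed.

End Darts.

Section GraphMaps.

Variables (K G : mgraph) (f : gmap K G).

Lemma gmd_drev (d : dart K) : gmd f (drev d) = drev (gmd f d).
Proof. by rewrite /gmd /drev /=; case: (gme f d.1).2. Qed.

Hypothesis f_graph : is_graph_map f.

Lemma graph_map_dtail (d : dart K) : dtail (gmd f d) = gmv f (dtail d).
Proof. by rewrite /dtail -gmd_drev f_graph. Qed.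

Variable h : mV G -> nat.

Definition uphill (e : mE K) : bool := h (gmv f (msrc e)) < h (gmv f (mdst e)).

Lemma upper_dtail_le e :
  h (gmv f (dtail (e, uphill e))) <= h (gmv f (dhead (e, uphill e))).
Proof. by rewrite /uphill /dtail /dhead /=; case: ltnP => // /ltnW. Qed.

Lemma gmd_uphill e (d : dart G) :
  (gme f e).1 = d.1 -> descending h d -> gmd f (e, uphill e) = d.
Proof.
move=> eq_e desc_d; apply: (dart_eq_descending (h := h)) => //.
by rewrite (graph_map_dtail (e, _)) (f_graph (e, _)); apply: upper_dtail_le.
Qed.

End GraphMaps.

(* [P] plays the role of the edges of a breadth-first spanning tree, [h] of
   its height function. *)
Definition parent_edges (G : mgraph) (h : mV G -> nat) (P : {set mE G}) : Prop :=
  (forall t, t \in P -> exists c, descending h (t, c)) /\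
  (forall d d' : dart G, d.1 \in P -> d'.1 \in P ->
     descending h d -> descending h d' -> dhead d = dhead d' -> d = d').

Lemma connected_parent_edges (G : mgraph) : connected G ->
  exists h, exists2 P : {set mE G}, parent_edges h P & #|P| = #|mV G|.-1.
Proof.
case=> /card_gt0P[x0 _] G_conn.
have [h h_pred] := connect_height (G_conn x0).
pose S := {x : mV G | x != x0}.
have par_ex (x : S) : exists d : dart G, dhead d = val x /\ descending h d.
  have [z /adj_dart[d [tl hd]] lt_h] := h_pred _ (valP x).
  by exists d; rewrite /descending tl hd.
have [par par_spec] := fin_all_exists par_ex.
have par_uniq x d : d.1 = (par x).1 -> descending h d -> d = par x.
  by move=> eq_e desc_d; apply: descending_eq desc_d (proj2 (par_spec x)).
have par_inj : injective (fun x => (par x).1).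
  move=> x y /= eq_e; apply: val_inj.
  rewrite -(proj1 (par_spec x)) -(proj1 (par_spec y)); congr dhead.
  by apply: par_uniq; [rewrite eq_e | apply: (proj2 (par_spec x))].
exists h, [set (par x).1 | x : S]; last first.
  by rewrite card_imset // card_sig cardC1.
split=> [t /imsetP[x _ ->] | d d' /imsetP[x _ ex] /imsetP[y _ ey] dd dd' eq_hd].
  by exists (par x).2; rewrite -surjective_pairing; apply: (proj2 (par_spec x)).
rewrite (par_uniq _ _ ex dd) (par_uniq _ _ ey dd') in eq_hd *; congr par.
by apply: val_inj; rewrite -(proj1 (par_spec x)) -(proj1 (par_spec y)).
Qed.

Section ParentEdgesCount.

Variables (G : mgraph) (I : finType) (E : I -> mgraph).
Variable f : forall i, gmap (E i) G.
Hypothesis f_imm : forall i, immersion (f i).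
Hypothesis E_nonempty : forall i, 0 < #|mV (E i)|.
Hypothesis f_cover2 :
  forall t, \sum_i #|[pred e : mE (E i) | (gme (f i) e).1 == t]| = 2.

Variables (h : mV G -> nat) (P : {set mE G}).
Hypothesis P_parent : parent_edges h P.

Let lift := {i : I & mE (E i)}.
Let image_edge (z : lift) : mE G := (gme (f (tag z)) (tagged z)).1.

Lemma card_lifts : #|[pred z | image_edge z \in P]| = 2 * #|P|.
Proof.
rewrite -[LHS]sum1_card (partition_big image_edge (fun t => t \in P)) //=.
rewrite mulnC -sum_nat_const; apply: eq_bigr => t Pt.
rewrite -(f_cover2 t) -(card_tagged_pred (fun i e => (gme (f i) e).1 == t)).
rewrite -sum1_card; apply: eq_bigl => z; rewrite !inE /image_edge.
by case: eqP => [->|]; rewrite ?Pt ?andbF.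
Qed.

Let high_end i (e : mE (E i)) : mV (E i) := dhead (e, uphill (f i) h e).

Lemma lift_descending i (e : mE (E i)) : (gme (f i) e).1 \in P ->
  exists2 d, descending h d & gmd (f i) (e, uphill (f i) h e) = d.
Proof.
case/(proj1 P_parent) => c desc_c; exists ((gme (f i) e).1, c) => //.
exact: (gmd_uphill (proj1 (f_imm i))) desc_c.
Qed.

Lemma high_end_not_lowest i (e : mE (E i)) : (gme (f i) e).1 \in P ->
  h (gmv (f i) (dtail (e, uphill (f i) h e))) < h (gmv (f i) (high_end e)).
Proof.
case/lift_descending=> d desc_d fd; have [f_graph _] := f_imm i.
by rewrite /high_end -(f_graph (e, _)) -(graph_map_dtail f_graph) fd.
Qed.

Lemma high_end_inj i (e e' : mE (E i)) :
  (gme (f i) e).1 \in P -> (gme (f i) e').1 \in P ->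
  high_end e = high_end e' -> e = e'.
Proof.
move=> Pe Pe' eq_high; have [f_graph f_inj] := f_imm i.
have [d desc_d fd] := lift_descending Pe.
have [d' desc_d' fd'] := lift_descending Pe'.
have eq_d : d = d'.
  apply: (proj2 P_parent) => //; [by rewrite -fd | by rewrite -fd' |].
  rewrite -fd -fd' (f_graph (e, _)) (f_graph (e', _)).
  by rewrite -/(high_end e) -/(high_end e') eq_high.
by have /(congr1 fst) := f_inj _ _ eq_high (etrans fd (etrans eq_d (esym fd'))).
Qed.

Lemma parent_edges_count : #|I| + 2 * #|P| <= \sum_i #|mV (E i)|.
Proof.
have lowest_ex i : exists y, forall y', h (gmv (f i) y) <= h (gmv (f i) y').
  have /card_gt0P[y0 _] := E_nonempty i.
  case: (arg_minnP (fun y => h (gmv (f i) y)) (isT : predT y0)) => y _ y_min.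
  by exists y => y'; apply: y_min.
have [lowest lowest_min] := fin_all_exists lowest_ex.
pose g (u : I + {z : lift | image_edge z \in P}) : {i : I & mV (E i)} :=
  match u with
  | inl i => Tagged (fun j => mV (E j)) (lowest i)
  | inr z => Tagged (fun j => mV (E j)) (high_end (tagged (val z)))
  end.
have g_inj : injective g.
  move=> [i|[[i e] Pe]] [j|[[j e'] Pe']] /= eq_g;
    have eq_ij := congr1 tag eq_g; simpl in eq_ij; subst j;
    have {}eq_g := eq_from_Tagged eq_g.
  - by [].
  - have := lowest_min i (dtail (e', uphill (f i) h e')).
    by rewrite eq_g leqNgt high_end_not_lowest.
  - have := lowest_min i (dtail (e, uphill (f i) h e)).
    by rewrite -eq_g leqNgt high_end_not_lowest.
  - have /= eq_e := high_end_inj Pe Pe' eq_g; subst e'.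
    by congr inr; apply: val_inj.
by have := leq_card g g_inj; rewrite card_sum card_sig card_lifts card_tagged_sum.
Qed.

End ParentEdgesCount.

Lemma two_cover_immersion_count (G : mgraph) (I : finType) (E : I -> mgraph)
    (f : forall i, gmap (E i) G) :
  connected G -> (forall i, immersion (f i)) -> (forall i, 0 < #|mV (E i)|) ->
  (forall t, \sum_i #|[pred e : mE (E i) | (gme (f i) e).1 == t]| = 2) ->
  #|I| + 2 * (#|mV G|).-1 <= \sum_i #|mV (E i)|.
Proof.
move=> /connected_parent_edges[h [P P_parent <-]] f_imm E_nonempty f_cover2.
exact: parent_edges_count f_imm E_nonempty f_cover2 _ _ P_parent.
Qed.

Section Cast.

Variables (U : mgraph) (Vs : mV U -> mgraph) (K : mgraph).

Definition cast_gmap (w v : mV U) (eq_wv : w = v) (f : gmap K (Vs w)) :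
    gmap K (Vs v) :=
  eq_rect w (fun u => gmap K (Vs u)) f v eq_wv.

Lemma cast_immersion w v (eq_wv : w = v) (f : gmap K (Vs w)) :
  immersion f -> immersion (cast_gmap eq_wv f).
Proof. by case: v / eq_wv. Qed.

Lemma cast_gme w v (eq_wv : w = v) (f : gmap K (Vs w)) x (t : mE (Vs v)) :
  (Tagged (fun u => mE (Vs u)) (gme f x).1 == Tagged (fun u => mE (Vs u)) t) =
  ((gme (cast_gmap eq_wv f) x).1 == t).
Proof. by case: v / eq_wv t => t; rewrite eq_Tagged. Qed.

End Cast.

Lemma vertex_space_count (X : graph_of_spaces) (v : mV (gU X)) : two_covered X ->
  2 * (#|mV (gVs X v)|).-1 <=
  \sum_(d : dart (gU X) | dhead d == v) (#|mV (gEs X d.1)|).-1.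
Proof.
case=> _ V_conn E_conn tau_imm tau_cover2.
pose I := {d : dart (gU X) | dhead d == v}.
pose f (i : I) := cast_gmap (eqP (valP i)) (gtau X (val i)).
have f_cover2 t :
    \sum_(i : I) #|[pred e : mE (gEs X (val i).1) | (gme (f i) e).1 == t]| = 2.
  rewrite -(tau_cover2 (Tagged (fun u => mE (gVs X u)) t)).
  rewrite (bigID (fun d => dhead d == v)) /=.
  rewrite [X in _ = _ + X]big1 ?addn0 => [|d d_v]; last first.
    apply: eq_card0 => x; rewrite !inE.
    by apply: contraNF d_v => /eqP/(congr1 tag) /= ->.
  rewrite [RHS]big_sub; apply: eq_bigr => i _; apply: eq_card => x.
  by rewrite !inE (cast_gme (eqP (valP i))).
have := two_cover_immersion_count (V_conn v)
  (fun i => cast_immersion _ (tau_imm _)) (fun i => proj1 (E_conn _)) f_cover2.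
rewrite sum_pred_card => [|i]; last exact: (proj1 (E_conn _)).
rewrite addnC leq_add2r => le; apply: (leq_trans le).
by rewrite (big_sub [pred d | dhead d == v]).
Qed.

Lemma sum_dart_fst (G : mgraph) (F : mE G -> nat) :
  \sum_(d : dart G) F d.1 = 2 * \sum_e F e.
Proof.
rewrite -(pair_bigA _ (fun e (_ : bool) => F e)) big_distrr /=.
by apply: eq_bigr => e _; rewrite sum_nat_const card_bool mulnC.
Qed.

Lemma excess_vertices_le_excess_edges (X : graph_of_spaces) : two_covered X ->
  \sum_v (#|mV (gVs X v)|).-1 <= \sum_a (#|mV (gEs X a)|).-1.
Proof.
move=> X2; rewrite -(@leq_pmul2l 2) // -sum_dart_fst big_distrr /=.
rewrite (partition_big (@dhead (gU X)) predT) //=.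
by apply: leq_sum => v _; apply: vertex_space_count.
Qed.

Local Open Scope ring_scope.

Theorem lemma4p2 (X : graph_of_spaces) :
  two_covered X -> euler (horizontal X) <= euler (gU X).
Proof.
move=> X2; have := excess_vertices_le_excess_edges X2.
case: X2 => _ V_conn E_conn _ _.
rewrite /euler /= !card_tagged_sum.
rewrite (sum_pred_card (fun v => proj1 (V_conn v))).
rewrite (sum_pred_card (fun a => proj1 (E_conn a))).
set sV := (\sum_v _)%N; set sE := (\sum_a _)%N.
set nV := #|mV _|; set nE := #|mE _|.
by clearbody sV sE nV nE; lia.
Qed.
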